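(* Let $k\ge 0$, $d\ge1$. A vector $\mathfrak{c}=(c_1,\ldots,c_d)\in\mathbb{N}^d$ is the clique vector of a $k$-connected threshold graph if and only if the vector $\mathfrak{b}=(b_1,\ldots,b_d)$ defined by \[ \sum_{i=1}^d b_i x^{i-1}=\sum_{i=1}^d c_i (x-1)^{i-1} \] has positive components, $d\ge k$, and $b_1=b_2=\cdots=b_k=1$.
   Context: For a graph $G$, $S(G)$ is obtained by adding a new vertex adjacent to all vertices of $G$, and $D(G)$ by adding a new isolated vertex. A threshold graph is a graph obtainable from the graph with no vertices by a finite sequence of $S$- and $D$-operations (with the first operation applied to the empty graph being $S$). The clique vector $(c_1,\ldots,c_d)$ of a graph records the number $c_i$ of cliques with exactly $i$ vertices, $d$ being the largest size of a clique. A graph is $k$-connected if it has at least $k$ vertices and removing any set of fewer than $k$ vertices leaves a connected graph; every graph is $0$-connected. *)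

From HB Require Import structures.
From mathcomp Require Import all_boot all_order all_algebra.
Set Implicit Arguments. Unset Strict Implicit. Unset Printing Implicit Defensive.
Import GRing.Theory.

(* A finite simple graph on vertex set 'I_n (adjacency assumed symmetric and
   irreflexive; all graphs built below are). *)
Record graph := Graph { gn : nat; gadj : rel 'I_gn }.

Definition empty_graph : graph := @Graph 0 (fun _ _ => false).

(* ext true G = S(G) : new vertex (ord_max) adjacent to all old vertices;
   ext false G = D(G) : new isolated vertex. *)
Definition ext (b : bool) (G : graph) : graph :=
  @Graph (gn G).+1 (fun x y : 'I_(gn G).+1 =>
    match (insub (val x) : option 'I_(gn G)), (insub (val y) : option 'I_(gn G)) with
    | Some a, Some a' => gadj a a'
    | None, Some _ | Some _, None => b
    | None, None => false
    end).

Definition build (s : seq bool) : graph := foldl (fun G b => ext b G) empty_graph s.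

(* s is a valid threshold-graph construction sequence: nonempty, first op S. *)
Definition threshold_seq (s : seq bool) : bool := head false s.

Definition clique (G : graph) (A : {set 'I_(gn G)}) : bool :=
  [forall x in A, forall y in A, (x != y) ==> gadj x y].

Definition clique_number (G : graph) : nat :=
  \max_(A : {set 'I_(gn G)} | clique A) #|A|.

Definition nb_cliques (G : graph) (i : nat) : nat :=
  #|[set A : {set 'I_(gn G)} | clique A & #|A| == i]|.

Definition clique_vector (G : graph) : seq nat :=
  [seq nb_cliques G i | i <- iota 1 (clique_number G)].

Definition connected_outside (G : graph) (S : {set 'I_(gn G)}) : Prop :=
  forall x y, x \notin S -> y \notin S ->
    connect [rel u v | [&& u \notin S, v \notin S & gadj u v]] x y.

Definition k_connected (k : nat) (G : graph) : Prop :=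
  k <= gn G /\ forall S : {set 'I_(gn G)}, #|S| < k -> connected_outside S.

(* sum_{i=1}^d c_i (x-1)^{i-1}, as an integer polynomial; its coefficient of
   x^(i-1) is b_i. *)
Definition cpoly (c : seq nat) : {poly int} :=
  (\sum_(i < size c) ((nth 0%N c i)%:R)%:P * ('X - 1) ^+ i)%R.

Definition bvec (c : seq nat) (i : nat) : int := ((cpoly c)`_i)%R.

From HB Require Import structures.
From mathcomp Require Import all_boot all_order all_algebra.
From mathcomp Require Import zify ring.
Set Implicit Arguments. Unset Strict Implicit. Unset Printing Implicit Defensive.
Import GRing.Theory Num.Theory.

(* Adding a dominating vertex (S) maps the clique counts c_(i+1) to
   c_(i+1) + c_i, adding an isolated vertex (D) adds 1 to c_1; for
   B(x) = sum_i c_i (x-1)^(i-1) these read B |-> x B + 1 and B |-> B + 1.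
   Hence the graph built by S D^(m_d) ... S D^(m_1) has b-vector
   (m_1 + 1, ..., m_d + 1): the b-vectors of threshold graphs are exactly the
   positive vectors, and b determines c.  A threshold graph is k-connected iff
   its construction ends with at least k operations S, and the length of this
   final run of S's is the number of leading 1's of b. *)

Lemma cliqueP (G : graph) (A : {set 'I_(gn G)}) :
  reflect {in A &, forall x y, x != y -> gadj x y} (clique A).
Proof.
apply: (iffP idP) => [/forall_inP cliqueA x y xA yA | cliqueA].
  by have /forall_inP/(_ y yA)/implyP := cliqueA x xA.
by apply/forall_inP => x xA; apply/forall_inP => y yA; apply/implyP; apply: cliqueA.
Qed.

Section Extension.
Variable G : graph.
Local Notation n := (gn G).

Definition old (a : 'I_n) : 'I_n.+1 := lift ord_max a.
Definition old_set (X : {set 'I_n}) : {set 'I_n.+1} := old @: X.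
Definition new_set (X : {set 'I_n}) : {set 'I_n.+1} := ord_max |: old_set X.
Definition old_part (A : {set 'I_n.+1}) : {set 'I_n} := [set a | old a \in A].

Lemma old_inj : injective old. Proof. exact: lift_inj. Qed.

Lemma old_neq_max a : (old a == ord_max) = false.
Proof. by apply/negbTE; rewrite eq_sym neq_lift. Qed.

Lemma new_or_old (x : 'I_n.+1) : x = ord_max \/ exists a, x = old a.
Proof. by case: (unliftP ord_max x) => [a ->|->]; [right; exists a | left]. Qed.

Lemma insub_old a : (insub (val (old a)) : option 'I_n) = Some a.
Proof. by rewrite [val _]lift_max valK. Qed.

Lemma insub_max : (insub (val (@ord_max n)) : option 'I_n) = None.
Proof. by rewrite insubN //= ltnn. Qed.

Lemma max_notin_old_set X : ord_max \notin old_set X.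
Proof. by apply/imsetP => -[a _ /esym/eqP]; rewrite old_neq_max. Qed.

Lemma old_in_old_set X a : (old a \in old_set X) = (a \in X).
Proof. exact/mem_imset/old_inj. Qed.

Lemma max_in_new_set X : ord_max \in new_set X.
Proof. exact: setU11. Qed.

Lemma old_in_new_set X a : (old a \in new_set X) = (a \in X).
Proof. by rewrite in_setU1 old_neq_max old_in_old_set. Qed.

Lemma old_partK : cancel old_set old_part.
Proof. by move=> X; apply/setP => a; rewrite inE old_in_old_set. Qed.

Lemma old_part_newK : cancel new_set old_part.
Proof. by move=> X; apply/setP => a; rewrite inE old_in_new_set. Qed.

Lemma old_set_part (A : {set 'I_n.+1}) : ord_max \notin A -> old_set (old_part A) = A.
Proof.
move=> Amax; apply/setP => x; case: (new_or_old x) => [->|[a ->]].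
  by rewrite (negbTE (max_notin_old_set _)) (negbTE Amax).
by rewrite old_in_old_set inE.
Qed.

Lemma new_set_part (A : {set 'I_n.+1}) : ord_max \in A -> new_set (old_part A) = A.
Proof.
move=> Amax; apply/setP => x; case: (new_or_old x) => [->|[a ->]].
  by rewrite max_in_new_set Amax.
by rewrite old_in_new_set inE.
Qed.

Lemma card_old_set X : #|old_set X| = #|X|.
Proof. exact/card_imset/old_inj. Qed.

Lemma card_new_set X : #|new_set X| = #|X|.+1.
Proof. by rewrite cardsU1 max_notin_old_set card_old_set. Qed.

Variable b : bool.

Lemma ext_adj_old a a' : @gadj (ext b G) (old a) (old a') = gadj a a'.
Proof. by rewrite /= !insub_old. Qed.

Lemma ext_adj_old_max a : @gadj (ext b G) (old a) ord_max = b.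
Proof. by rewrite /= insub_old insub_max. Qed.

Lemma ext_adj_max_old a : @gadj (ext b G) ord_max (old a) = b.
Proof. by rewrite /= insub_old insub_max. Qed.

Lemma ext_adj_max : @gadj (ext b G) ord_max ord_max = false.
Proof. by rewrite /= insub_max. Qed.

Lemma clique_old_set X : @clique (ext b G) (old_set X) = clique X.
Proof.
apply/cliqueP/cliqueP => cliqueX.
  move=> x y xX yX neq_xy; rewrite -ext_adj_old.
  by apply: cliqueX; rewrite ?old_in_old_set //; apply: contra neq_xy => /eqP/old_inj->.
move=> x y; case: (new_or_old x) => [->|[a ->]]; first by rewrite (negbTE (max_notin_old_set _)).
case: (new_or_old y) => [->|[a' ->]]; first by rewrite (negbTE (max_notin_old_set _)).
rewrite !old_in_old_set ext_adj_old => aX a'X neq_aa'.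
by apply: cliqueX => //; apply: contra neq_aa' => /eqP->.
Qed.

Lemma clique_new_set X :
  @clique (ext b G) (new_set X) = clique X && (b || (X == set0)).
Proof.
apply/cliqueP/andP => [cliqueX | [/cliqueP cliqueX bX]].
  split.
    apply/cliqueP => x y xX yX neq_xy; rewrite -ext_adj_old.
    by apply: cliqueX; rewrite ?old_in_new_set //; apply: contra neq_xy => /eqP/old_inj->.
  case: (set_0Vmem X) => [->|[a aX]]; first by rewrite eqxx orbT.
  have := cliqueX ord_max (old a) (max_in_new_set _).
  by rewrite old_in_new_set ext_adj_max_old eq_sym old_neq_max => ->.
have adj_b a : a \in X -> b.
  by move=> aX; case/orP: bX => // /eqP X0; rewrite X0 inE in aX.
move=> x y; case: (new_or_old x) => [->|[a ->]]; case: (new_or_old y) => [->|[a' ->]].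
- by rewrite eqxx.
- by rewrite old_in_new_set ext_adj_max_old => _ /adj_b.
- by rewrite old_in_new_set ext_adj_old_max => /adj_b.
rewrite !old_in_new_set ext_adj_old => aX a'X neq_aa'.
by apply: cliqueX => //; apply: contra neq_aa' => /eqP->.
Qed.

End Extension.

Lemma nb_cliques_ext b G i :
  nb_cliques (ext b G) i.+1 = nb_cliques G i.+1 +
    #|[set X : {set 'I_(gn G)} | [&& clique X, b || (X == set0) & #|X| == i]]|.
Proof.
set withMax := [set A : {set 'I_(gn G).+1} | ord_max \in A].
rewrite /nb_cliques -(cardsID withMax) addnC.
have old_set_inj := can_inj (@old_partK G).
have new_set_inj := can_inj (@old_part_newK G).
have -> : [set A | @clique (ext b G) A & #|A| == i.+1] :\: withMax
          = @old_set G @: [set X | clique X & #|X| == i.+1].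
  apply/setP => A; rewrite !inE; case Amax: (ord_max \in A) => /=.
    by apply/esym/imsetP => -[X _ AX]; rewrite AX (negbTE (max_notin_old_set _)) in Amax.
  by rewrite -(old_set_part (negbT Amax)) mem_imset // clique_old_set card_old_set inE.
have -> : [set A | @clique (ext b G) A & #|A| == i.+1] :&: withMax
          = @new_set G @: [set X | [&& clique X, b || (X == set0) & #|X| == i]].
  apply/setP => A; rewrite !inE; case Amax: (ord_max \in A) => /=.
    rewrite -(new_set_part Amax) mem_imset // clique_new_set card_new_set inE eqSS andbT.
    by case: (clique _); case: (_ || _).
  by rewrite andbF; apply/esym/imsetP => -[X _ AX]; rewrite AX max_in_new_set in Amax.
by rewrite !card_imset.
Qed.

Lemma nb_cliques0 G : nb_cliques G 0 = 1.
Proof.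
rewrite /nb_cliques -(cards1 (@set0 'I_(gn G))).
have -> // : [set A : {set 'I_(gn G)} | clique A & #|A| == 0] = [set set0].
apply/setP => A; rewrite !inE cards_eq0 andbC; case: eqP => // ->.
by apply/cliqueP => x y; rewrite inE.
Qed.

Lemma nb_cliques_cone G i :
  nb_cliques (ext true G) i.+1 = nb_cliques G i.+1 + nb_cliques G i.
Proof. by rewrite nb_cliques_ext. Qed.

Lemma nb_cliques_add_isolated G i :
  nb_cliques (ext false G) i.+1 = nb_cliques G i.+1 + (i == 0).
Proof.
rewrite nb_cliques_ext /=; congr (_ + _); case: i => [|i] /=.
  rewrite -(cards1 (@set0 'I_(gn G))).
  have -> // : [set X : {set 'I_(gn G)} | [&& clique X, X == set0 & #|X| == 0]] = [set set0].
  apply/setP => A; rewrite !inE cards_eq0; case: eqP => [->|] /=; last by rewrite andbF.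
  by rewrite andbT; apply/cliqueP => x y; rewrite inE.
apply/eqP; rewrite cards_eq0; apply/eqP/setP => A; rewrite !inE.
by case: eqP => [->|]; rewrite ?cards0 ?andbF.
Qed.

Lemma nb_cliques_empty i : nb_cliques empty_graph i.+1 = 0.
Proof.
apply/eqP; rewrite cards_eq0; apply/eqP/setP => A; rewrite !inE.
by have := max_card (mem A); rewrite card_ord leqn0 => /eqP->; rewrite andbF.
Qed.

Lemma homo_connect (T T' : finType) (e : rel T) (e' : rel T') (f : T -> T') :
  {homo f : x y / e x y >-> e' x y} -> {homo f : x y / connect e x y >-> connect e' x y}.
Proof.
move=> f_homo x y /connectP[p e_p ->]; elim: p x e_p => [|z p IHp] x /=.
  by rewrite connect0.
by case/andP=> e_xz /IHp; apply: connect_trans (connect1 (f_homo _ _ e_xz)).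
Qed.

Lemma k_connected0 G : k_connected 0 G.
Proof. by []. Qed.

Lemma k_connected_cone_inv G k : k_connected k.+1 (ext true G) -> k_connected k G.
Proof.
case=> le_kn conn; split=> // S card_S a a' aS a'S.
have := conn (new_set S); rewrite card_new_set ltnS => /(_ card_S (old a) (old a')).
rewrite !old_in_new_set => /(_ aS a'S).
pose back (x : 'I_(gn G).+1) := odflt a (unlift ord_max x).
have backK u : back (old u) = u by rewrite /back /old liftK.
rewrite -{2}(backK a) -{2}(backK a'); apply: homo_connect => u v /and3P[uS vS].
case: (new_or_old u) uS => [->|[u0 ->]]; first by rewrite max_in_new_set.
case: (new_or_old v) vS => [->|[v0 ->]]; first by rewrite max_in_new_set.
by rewrite !old_in_new_set ext_adj_old !backK => u0S v0S adj; apply/and3P.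
Qed.

Lemma k_connected_cone G k : k_connected k G -> k_connected k.+1 (ext true G).
Proof.
case=> le_kn conn; split=> // S card_S x y xS yS.
set e := [rel u v | _].
have [Smax | Smax] := boolP (ord_max \in S).
  rewrite -(new_set_part Smax) card_new_set ltnS in card_S.
  case: (new_or_old x) xS => [->|[a ->]]; first by rewrite Smax.
  case: (new_or_old y) yS => [->|[a' ->]]; first by rewrite Smax.
  move=> a'S aS; have := conn _ card_S a a'; rewrite !inE => /(_ aS a'S).
  apply: homo_connect => u v /and3P[uS vS adj]; rewrite !inE in uS vS.
  by rewrite /e; apply/and3P; rewrite ext_adj_old.
have to_max z : z \notin S -> connect e z ord_max.
  case: (new_or_old z) => [-> _|[a -> aS]]; first exact: connect0.
  by apply: connect1; rewrite /e; apply/and3P; rewrite ext_adj_old_max.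
have from_max z : z \notin S -> connect e ord_max z.
  case: (new_or_old z) => [-> _|[a -> aS]]; first exact: connect0.
  by apply: connect1; rewrite /e; apply/and3P; rewrite ext_adj_max_old.
exact: connect_trans (to_max _ xS) (from_max _ yS).
Qed.

Lemma k_connected_add_isolated G k :
  0 < gn G -> k_connected k (ext false G) -> k = 0.
Proof.
move=> n_gt0 [_ conn]; case: k conn => // k conn.
have := conn set0; rewrite cards0 => /(_ isT ord_max (old (Ordinal n_gt0))).
rewrite !inE => /(_ isT isT)/connectP[[|z p]].
  by move=> _ /eqP; rewrite old_neq_max.
case/andP=> /and3P[_ _]; case: (new_or_old z) => [->|[a ->]].
  by rewrite ext_adj_max.
by rewrite ext_adj_max_old.
Qed.

Lemma build_rcons s b : build (rcons s b) = ext b (build s).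
Proof. by rewrite /build foldl_rcons. Qed.

Lemma size_build s : gn (build s) = size s.
Proof. by elim/last_ind: s => [|s b IHs] //; rewrite build_rcons /= IHs size_rcons. Qed.

Lemma threshold_seq_head s : threshold_seq s -> head true s.
Proof. by case: s. Qed.

Lemma head_rcons_true (s : seq bool) b : head true (rcons s b) -> head true s.
Proof. by case: s. Qed.

Definition omega_of (s : seq bool) : nat :=
  foldl (fun w (b : bool) => if b then w.+1 else maxn w 1) 0 s.

Definition kappa_of (s : seq bool) : nat :=
  foldl (fun k (b : bool) => if b then k.+1 else 0) 0 s.

Definition bpoly_of (s : seq bool) : {poly int} :=
  foldl (fun p (b : bool) => if b then p * 'X + 1 else p + 1)%R 0%R s.

Lemma omega_of_rcons s b :
  omega_of (rcons s b) = if b then (omega_of s).+1 else maxn (omega_of s) 1.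
Proof. by rewrite /omega_of foldl_rcons. Qed.

Lemma kappa_of_rcons s b : kappa_of (rcons s b) = if b then (kappa_of s).+1 else 0.
Proof. by rewrite /kappa_of foldl_rcons. Qed.

Lemma bpoly_of_rcons s b :
  bpoly_of (rcons s b) = (if b then bpoly_of s * 'X + 1 else bpoly_of s + 1)%R.
Proof. by rewrite /bpoly_of foldl_rcons. Qed.

Lemma omega_of_gt0 s : s != [::] -> 0 < omega_of s.
Proof. by case/lastP: s => // s [] _; rewrite omega_of_rcons // leq_maxr. Qed.

Lemma kappa_of_leq_omega s : kappa_of s <= omega_of s.
Proof.
by elim/last_ind: s => // s [] IHs; rewrite kappa_of_rcons omega_of_rcons.
Qed.

Lemma nb_cliques_build_gt s i : omega_of s < i -> nb_cliques (build s) i = 0.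
Proof.
elim/last_ind: s i => [|s [] IHs] [|i] //= lt_i; first exact: nb_cliques_empty.
  by rewrite build_rcons nb_cliques_cone !IHs //; rewrite omega_of_rcons in lt_i; lia.
rewrite build_rcons nb_cliques_add_isolated IHs; rewrite omega_of_rcons in lt_i; lia.
Qed.

Lemma nb_cliques_build_omega s : 0 < nb_cliques (build s) (omega_of s).
Proof.
elim/last_ind: s => [|s [] IHs]; first by rewrite nb_cliques0.
  by rewrite build_rcons omega_of_rcons nb_cliques_cone addn_gt0 IHs orbT.
rewrite build_rcons omega_of_rcons.
by case: (omega_of s) IHs => [|w] IHs; rewrite /maxn /= nb_cliques_add_isolated addn_gt0 ?IHs ?orbT.
Qed.

Lemma clique_number_build s : clique_number (build s) = omega_of s.
Proof.
apply/eqP; rewrite eqn_leq; apply/andP; split.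
  apply/bigmax_leqP => A cliqueA; rewrite leqNgt; apply/negP => /nb_cliques_build_gt.
  by move/eqP; rewrite cards_eq0 => /eqP/setP/(_ A); rewrite !inE cliqueA eqxx.
have := nb_cliques_build_omega s; rewrite card_gt0 => /set0Pn[A].
by rewrite inE => /andP[cliqueA /eqP <-]; exact: leq_bigmax_cond.
Qed.

Lemma size_clique_vector_build s : size (clique_vector (build s)) = omega_of s.
Proof. by rewrite size_map size_iota clique_number_build. Qed.

Lemma k_connected_build s k : head true s -> k_connected k (build s) <-> k <= kappa_of s.
Proof.
elim/last_ind: s k => [|s [] IHs] k hs; rewrite ?build_rcons ?kappa_of_rcons.
- by rewrite leqn0; split=> [[]|/eqP->]; rewrite ?leqn0.
- case: k => [|k]; first by split=> // _; exact: k_connected0.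
  rewrite ltnS -IHs ?(head_rcons_true hs) //.
  by split; [exact: k_connected_cone_inv | exact: k_connected_cone].
have n_gt0 : 0 < gn (build s) by rewrite size_build; case: s hs {IHs}.
split=> [/(k_connected_add_isolated n_gt0)->|] //.
by rewrite leqn0 => /eqP->; exact: k_connected0.
Qed.

Section Bpolynomial.
Local Open Scope ring_scope.

Lemma clique_sum_build s N : (omega_of s <= N)%N ->
  \sum_(i < N) ((nb_cliques (build s) i.+1)%:R : int)%:P * ('X - 1) ^+ i = bpoly_of s.
Proof.
elim/last_ind: s N => [|s [] IHs] N; rewrite ?omega_of_rcons => le_wN.
- by rewrite big1 // => i _; rewrite nb_cliques_empty mul0r.
- case: N le_wN => [//|N] le_wN.
  under eq_bigr do rewrite build_rcons nb_cliques_cone natrD polyCD mulrDl.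
  rewrite big_split /= IHs; last by lia.
  rewrite big_ord_recl /= nb_cliques0 expr0 mulr1.
  under eq_bigr do rewrite exprS mulrCA.
  by rewrite -mulr_sumr IHs ?bpoly_of_rcons; [ring | lia].
- case: N le_wN => [|N] le_wN; first by lia.
  under eq_bigr do rewrite build_rcons nb_cliques_add_isolated natrD polyCD mulrDl.
  rewrite big_split /= IHs; last by lia.
  rewrite big_ord_recl /= expr0 mulr1 big1 ?addr0 ?bpoly_of_rcons //.
  by move=> i _; rewrite mul0r.
Qed.

Lemma cpoly_clique_vector_build s : cpoly (clique_vector (build s)) = bpoly_of s.
Proof.
rewrite -(clique_sum_build (leqnn (omega_of s))) /cpoly size_clique_vector_build.
apply: eq_bigr => i _; rewrite (nth_map 0%N) ?size_iota ?clique_number_build //.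
by rewrite nth_iota ?clique_number_build.
Qed.

Lemma bpoly_of_gt0 s j : head true s -> (j < omega_of s)%N -> 0 < (bpoly_of s)`_j.
Proof.
elim/last_ind: s j => [|s [] IHs] j // hs;
  rewrite omega_of_rcons bpoly_of_rcons coefD coef1; have {}IHs := IHs _ (head_rcons_true hs).
  by case: j => [|j] lt_j; rewrite coefMX /= ?addr0 ?add0r ?IHs.
have s_nil : s != [::] by case: s hs {IHs}.
case: j => [|j] lt_j /=; rewrite ?addr0.
  by rewrite ltr_wpDr ?IHs ?omega_of_gt0.
by rewrite IHs //; move: (omega_of_gt0 s_nil) lt_j; lia.
Qed.

Lemma bpoly_of_lt_kappa s j : (j < kappa_of s)%N -> (bpoly_of s)`_j = 1.
Proof.
elim/last_ind: s j => [|s [] IHs] j //; rewrite kappa_of_rcons bpoly_of_rcons //.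
by case: j => [|j] lt_j; rewrite coefD coefMX coef1 /= ?addr0 ?add0r ?IHs.
Qed.

(* The D preceding the final run of S's raises the constant coefficient above 1,
   and each S of the run shifts it one place up. *)
Lemma bpoly_of_kappa_gt1 s : head true s -> (kappa_of s < omega_of s)%N ->
  1 < (bpoly_of s)`_(kappa_of s).
Proof.
elim/last_ind: s => [|s [] IHs] // hs;
  rewrite kappa_of_rcons omega_of_rcons bpoly_of_rcons coefD coef1 /=.
  by rewrite coefMX addr0 ltnS; apply: IHs (head_rcons_true hs).
have s_nil : s != [::] by case: s hs {IHs}.
by move=> _; rewrite ltrDr bpoly_of_gt0 ?omega_of_gt0 ?(head_rcons_true hs).
Qed.

Lemma size_cpoly c : (size (cpoly c) <= size c)%N.
Proof.
apply/leq_sizeP => j le_cj; rewrite /cpoly coef_sum big1 // => i _.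
have le_size : (size (('X - 1) ^+ i : {poly int}) <= j)%N.
  by rewrite -polyC1 size_exp_XsubC; exact: leq_trans (ltn_ord i) le_cj.
by rewrite coefCM (nth_default 0 le_size) mulr0.
Qed.

Lemma cpoly_shift c : cpoly c \Po ('X + 1) = \poly_(i < size c) ((nth 0%N c i)%:R : int).
Proof.
rewrite /cpoly poly_def rmorph_sum /=; apply: eq_bigr => i _.
rewrite comp_polyM comp_polyC rmorphXn /= comp_polyB comp_polyX -polyC1 comp_polyC.
by rewrite polyC1 addrK mul_polyC.
Qed.

Lemma cpoly_inj c1 c2 : size c1 = size c2 -> cpoly c1 = cpoly c2 -> c1 = c2.
Proof.
move=> eq_size eq_cpoly; apply: (@eq_from_nth _ 0%N) => // j lt_j.
have := congr1 (fun p => (p \Po ('X + 1))`_j) eq_cpoly.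
by rewrite /= !cpoly_shift !coef_poly -eq_size lt_j => /eqP; rewrite eqr_nat => /eqP.
Qed.

Definition threshold_of (bs : seq int) : seq bool :=
  foldr (fun b s => rcons s true ++ nseq `|b|.-1 false) [::] bs.

Lemma bpoly_of_add_isolated s m : bpoly_of (s ++ nseq m false) = bpoly_of s + m%:R.
Proof.
elim: m s => [|m IHm] s; first by rewrite cats0 addr0.
by rewrite /= -cat_rcons IHm bpoly_of_rcons mulrS addrA.
Qed.

Lemma omega_of_add_isolated s m :
  (0 < omega_of s)%N -> omega_of (s ++ nseq m false) = omega_of s.
Proof.
elim: m s => [|m IHm] s w_gt0; first by rewrite cats0.
by rewrite /= -cat_rcons IHm omega_of_rcons /= ?leq_maxr //; apply/maxn_idPl.
Qed.

Lemma threshold_seq_of bs : bs != [::] -> threshold_seq (threshold_of bs).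
Proof.
have head_of bs' : head true (threshold_of bs').
  by elim: bs' => //= b bs' IH; case: (threshold_of bs') IH.
by case: bs => //= b bs _; move: (head_of bs); rewrite /threshold_seq; case: (threshold_of bs).
Qed.

Lemma omega_of_threshold_of bs : omega_of (threshold_of bs) = size bs.
Proof.
elim: bs => //= b bs IHbs.
by rewrite omega_of_add_isolated omega_of_rcons ?IHbs.
Qed.

Lemma bpoly_of_threshold_of bs : all (fun b => 0 < b) bs -> bpoly_of (threshold_of bs) = Poly bs.
Proof.
elim: bs => //= b bs IHbs /andP[b_gt0 /IHbs IH].
rewrite bpoly_of_add_isolated bpoly_of_rcons IH cons_poly_def -addrA; congr (_ + _).
rewrite -mulrS prednK; last by rewrite absz_gt0 lt0r_neq0.
by rewrite -[X in X%:P](gtz0_abs b_gt0) -natz polyC_natr.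
Qed.

Lemma Poly_mkseq_coef (R : nzSemiRingType) (p : {poly R}) n :
  (size p <= n)%N -> Poly (mkseq (nth 0 p) n) = p.
Proof.
move=> le_pn; apply/polyP => j; rewrite coef_Poly.
have [lt_jn | le_nj] := ltnP j n; first by rewrite nth_mkseq.
by rewrite !nth_default ?size_mkseq // (leq_trans le_pn).
Qed.

Lemma clique_vector_build_threshold_of c :
  (forall i, (i < size c)%N -> 0 < bvec c i) ->
  clique_vector (build (threshold_of (mkseq (bvec c) (size c)))) = c.
Proof.
move=> b_gt0; have bs_gt0 : all (fun b => 0 < b) (mkseq (bvec c) (size c)).
  by apply/allP => b /mapP[i]; rewrite mem_iota => /andP[_ lt_ic] ->; exact: b_gt0.
apply: cpoly_inj; first by rewrite size_clique_vector_build omega_of_threshold_of size_mkseq.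
by rewrite cpoly_clique_vector_build bpoly_of_threshold_of // Poly_mkseq_coef ?size_cpoly.
Qed.

End Bpolynomial.

Theorem corollary2p3 (k d : nat) (c : seq nat) :
  1 <= d -> size c = d ->
  ((exists s : seq bool,
      threshold_seq s /\ k_connected k (build s) /\ clique_vector (build s) = c)
   <->
   ((forall i, i < d -> (0 < bvec c i)%R) /\ k <= d /\
    (forall i, i < k -> bvec c i = 1%R))).
Proof.
move=> d_gt0 size_c; split.
  case=> s [/threshold_seq_head head_s [conn_k cv_s]]; subst c d.
  rewrite size_clique_vector_build /bvec cpoly_clique_vector_build.
  have le_k := (k_connected_build k head_s).1 conn_k.
  split; first by move=> i; exact: bpoly_of_gt0.
  split; first exact: leq_trans le_k (kappa_of_leq_omega s).
  by move=> i lt_ik; rewrite bpoly_of_lt_kappa // (leq_trans lt_ik le_k).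
case=> b_gt0 [le_kd b_eq1]; subst d.
pose s := threshold_of (mkseq (bvec c) (size c)).
have ts_s : threshold_seq s by apply: threshold_seq_of; rewrite -size_eq0 size_mkseq -lt0n.
have cv_s : clique_vector (build s) = c by exact: clique_vector_build_threshold_of.
exists s; split=> //; split=> //.
apply/k_connected_build; first exact: threshold_seq_head.
rewrite leqNgt; apply/negP => lt_kappa_k.
have lt_kappa_w : kappa_of s < omega_of s.
  by rewrite -size_clique_vector_build cv_s (leq_trans lt_kappa_k le_kd).
have := bpoly_of_kappa_gt1 (threshold_seq_head ts_s) lt_kappa_w.
by rewrite -cpoly_clique_vector_build cv_s -/(bvec c _) b_eq1 ?ltxx.
Qed.
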